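(* Let $\mathcal M=(\mathcal S,\mathcal A,P,r,\gamma)$, $\mathcal Z$, $\{\sigma_t\}_{t\ge1}$, $\hat f$, $\mathfrak F$ be as in the context, and suppose the features $Z_t=\sigma_t(H_t)$ form an $(\epsilon,\delta)$-approximate information state with respect to $\mathfrak F$, with AIS approximator $(\hat r,\hat P)$. Let $\hat V$ be the solution of the AIS dynamic program, $\mu$ a policy greedy with respect to $\hat Q$, and $\pi=(\pi_t)_{t\ge1}$, $\pi_t=\mu\circ\sigma_t$, the induced history-based policy. Then $$\Delta:=\sup_{t\ge1}\ \sup_{h_t\in\mathcal H_t}\big|V^\star(s_t)-V^{\pi}_t(h_t)\big|\ \le\ \frac{2\big(\epsilon+\gamma\,\delta\,\kappa_{\mathfrak F}(\hat V,\hat f)\big)}{1-\gamma},$$ where $\kappa_{\mathfrak F}(\hat V,\hat f)=\sup_{z\in\mathcal Z,\,a\in\mathcal A}\rho_{\mathfrak F}\big(s\mapsto \hat V(\hat f(z,s,a))\big)$ and $s_t$ denotes the last state of $h_t$.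
   Context: MDP: $\mathcal M=(\mathcal S,\mathcal A,P,r,\gamma)$ with finite state space $\mathcal S$, finite action space $\mathcal A$, transition kernel $P(s'\mid s,a)$, bounded reward $r:\mathcal S\times\mathcal A\to\mathbb R$, discount $\gamma\in(0,1)$. $V^\star(s)$ is the optimal value: the supremum over all (randomised, possibly history-dependent) policies of $\mathbb E[\sum_{k\ge1}\gamma^{k-1}r(S_k,A_k)\mid S_1=s]$. A history at time $t$ is $h_t=(s_{1:t},a_{1:t-1})\in\mathcal H_t=\mathcal S^t\times\mathcal A^{t-1}$. Feature abstraction: $\mathcal Z$ is a set; maps $\sigma_t:\mathcal H_t\to\mathcal Z$ are recursively updatable, i.e. there is $\hat f:\mathcal Z\times\mathcal S\times\mathcal A\to\mathcal Z$ with $\sigma_{t+1}(s_{1:t+1},a_{1:t})=\hat f(\sigma_t(s_{1:t},a_{1:t-1}),s_{t+1},a_t)$ for all $t\ge1$. IPM: $\mathfrak F$ is a class of real functions on $\mathcal S$; for $\nu_1,\nu_2\in\Delta(\mathcal S)$, $d_{\mathfrak F}(\nu_1,\nu_2)=\sup_{g\in\mathfrak F}|\sum_s g(s)\nu_1(s)-\sum_s g(s)\nu_2(s)|$; the Minkowski functional is $\rho_{\mathfrak F}(g)=\inf\{\rho\ge0:\rho^{-1}g\in\mathfrak F\}$ (with $\inf\emptyset=+\infty$). AIS: the features are an $(\epsilon,\delta)$-AIS w.r.t. $\mathfrak F$ if there exist a bounded $\hat r:\mathcal Z\times\mathcal A\to\mathbb R$ and $\hat P:\mathcal Z\times\mathcal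 A\to\Delta(\mathcal S)$ (the AIS approximator) such that for all $t$, all $h_t\in\mathcal H_t$ and all $a\in\mathcal A$: $|r(s_t,a)-\hat r(\sigma_t(h_t),a)|\le\epsilon$ and $d_{\mathfrak F}(P(\cdot\mid s_t,a),\hat P(\cdot\mid\sigma_t(h_t),a))\le\delta$. AIS dynamic program: $\hat V:\mathcal Z\to\mathbb R$ is the unique bounded function satisfying $\hat V(z)=\max_{a}\hat Q(z,a)$, where $\hat Q(z,a)=\hat r(z,a)+\gamma\sum_{s'\in\mathcal S}\hat P(s'\mid z,a)\hat V(\hat f(z,s',a))$. A policy $\mu:\mathcal Z\to\Delta(\mathcal A)$ is greedy if $\mathrm{supp}\,\mu(z)\subseteq\arg\max_a\hat Q(z,a)$ for all $z$. Value of the history-based policy: $V^{\pi}_t(h_t)=\mathbb E[\sum_{k\ge t}\gamma^{k-t}r(S_k,A_k)]$ where the process starts at time $t$ from state $s_t$ with feature $Z_t=\sigma_t(h_t)$, actions are drawn as $A_k\sim\mu(Z_k)$, $S_{k+1}\sim P(\cdot\mid S_k,A_k)$, and $Z_{k+1}=\hat f(Z_k,S_{k+1},A_k)$. *)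

From HB Require Import structures.
From mathcomp Require Import all_boot all_order all_algebra.
From mathcomp Require Import all_classical all_reals all_analysis.
Set Implicit Arguments. Unset Strict Implicit. Unset Printing Implicit Defensive.
Import Order.TTheory GRing.Theory Num.Theory numFieldNormedType.Exports.
Local Open Scope ring_scope.
Local Open Scope classical_set_scope.

Section AIS.
Variables (R : realType) (S A : finType).

Definition is_distr (T : finType) (p : T -> R) : Prop :=
  (forall x, 0 <= p x) /\ \sum_(x : T) p x = 1.

(* A history h_t = (s_{1:t}, a_{1:t-1}) is encoded as (past, s_t) with
   past = [:: (s_1,a_1); ...; (s_{t-1},a_{t-1})]  (so t = size past + 1). *)

Definition history_policy := seq (S * A) -> S -> A -> R.
Definition is_policy (pol : history_policy) : Prop :=
  forall past s, is_distr (pol past s).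

Variables (P : S -> A -> S -> R) (r : S -> A -> R) (gamma : R).

Fixpoint ret_n (pol : history_policy) (n : nat) (past : seq (S * A)) (s : S) : R :=
  match n with
  | 0 => 0
  | n'.+1 => \sum_(a : A) pol past s a *
      (r s a + gamma * \sum_(s' : S) P s a s' * ret_n pol n' (rcons past (s, a)) s')
  end.

Definition policy_value (pol : history_policy) (s : S) : R :=
  limn (fun n => ret_n pol n [::] s).

Definition Vstar (s : S) : R :=
  sup [set policy_value pol s | pol in [set pol | is_policy pol]].

Definition dF (F : set (S -> R)) (nu1 nu2 : S -> R) : \bar R :=
  ereal_sup [set (`| \sum_(s : S) g s * nu1 s - \sum_(s : S) g s * nu2 s |)%:E
            | g in F].

(* Minkowski functional rho_F(g) = inf { rho > 0 : rho^{-1} g \in F } (inf empty = +oo) *)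
Definition rhoF (F : set (S -> R)) (g : S -> R) : \bar R :=
  ereal_inf [set rho%:E | rho in [set rho : R | 0 < rho /\ F (fun s => rho^-1 * g s)]].

Variable (Z : Type).

Definition kappaF (F : set (S -> R)) (Vhat : Z -> R) (fhat : Z -> S -> A -> Z) : \bar R :=
  ereal_sup [set rhoF F (fun s => Vhat (fhat za.1 s za.2)) | za in [set: Z * A]].

Definition recursively_updatable (sigma : seq (S * A) -> S -> Z)
    (fhat : Z -> S -> A -> Z) : Prop :=
  forall past s a s', sigma (rcons past (s, a)) s' = fhat (sigma past s) s' a.

Definition is_AIS (F : set (S -> R)) (sigma : seq (S * A) -> S -> Z)
    (eps delta : R) (rhat : Z -> A -> R) (Phat : Z -> A -> S -> R) : Prop :=
  (exists M : R, forall z a, `|rhat z a| <= M) /\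
  (forall z a, is_distr (Phat z a)) /\
  (forall past s a,
     `| r s a - rhat (sigma past s) a | <= eps /\
     (dF F (P s a) (Phat (sigma past s) a) <= delta%:E)%E).

Definition AIS_Q (rhat : Z -> A -> R) (Phat : Z -> A -> S -> R)
    (fhat : Z -> S -> A -> Z) (Vhat : Z -> R) (z : Z) (a : A) : R :=
  rhat z a + gamma * \sum_(s' : S) Phat z a s' * Vhat (fhat z s' a).

Definition solves_AIS_DP (rhat : Z -> A -> R) (Phat : Z -> A -> S -> R)
    (fhat : Z -> S -> A -> Z) (Vhat : Z -> R) : Prop :=
  (exists M : R, forall z, `|Vhat z| <= M) /\
  (forall z, (forall a, AIS_Q rhat Phat fhat Vhat z a <= Vhat z) /\
             (exists a, AIS_Q rhat Phat fhat Vhat z a = Vhat z)).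

Definition greedy (rhat : Z -> A -> R) (Phat : Z -> A -> S -> R)
    (fhat : Z -> S -> A -> Z) (Vhat : Z -> R) (mu : Z -> A -> R) : Prop :=
  (forall z, is_distr (mu z)) /\
  (forall z a, mu z a != 0 ->
     forall b, AIS_Q rhat Phat fhat Vhat z b <= AIS_Q rhat Phat fhat Vhat z a).

(* n-step expected discounted return of the feature-based process
   (S_k, Z_k), A_k ~ mu(Z_k), S_{k+1} ~ P(.|S_k,A_k), Z_{k+1} = fhat Z_k S_{k+1} A_k *)
Fixpoint feat_ret_n (fhat : Z -> S -> A -> Z) (mu : Z -> A -> R)
    (n : nat) (z : Z) (s : S) : R :=
  match n with
  | 0 => 0
  | n'.+1 => \sum_(a : A) mu z a *
      (r s a + gamma * \sum_(s' : S) P s a s' * feat_ret_n fhat mu n' (fhat z s' a) s')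
  end.

Definition Vpi (sigma : seq (S * A) -> S -> Z) (fhat : Z -> S -> A -> Z)
    (mu : Z -> A -> R) (past : seq (S * A)) (s : S) : R :=
  limn (fun n => feat_ret_n fhat mu n (sigma past s) s).

End AIS.

From HB Require Import structures.
From mathcomp Require Import all_boot all_order all_algebra.
From mathcomp Require Import all_classical all_reals all_analysis.
From mathcomp Require Import ring lra.

Set Implicit Arguments.
Unset Strict Implicit.
Unset Printing Implicit Defensive.
Import Order.TTheory GRing.Theory Num.Theory numFieldNormedType.Exports.
Local Open Scope ring_scope.
Local Open Scope classical_set_scope.

(* Compare [Vstar] and [Vpi] with the AIS value [Vhat (sigma past s)].  Along any
   history the true one-step backup [r + gamma E_P[Vhat o fhat]] is within
   [c = eps + gamma delta kappa] of [Qhat]: the reward is off by [eps] and, by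
   the definition of the IPM and of its Minkowski functional, the transition
   term by at most [delta rho_F(Vhat o fhat) <= delta kappa].  Unrolling the
   backup, the n-step return of every policy is at most [Vhat + err n], and
   that of the greedy feature-based policy (which only plays actions attaining
   [Vhat]) at least [Vhat - err n], with [err n --> c / (1 - gamma)].  In the
   limit [Vstar <= Vhat + c/(1-gamma)] and [Vpi >= Vhat - c/(1-gamma)], while
   [Vpi <= Vstar] since the feature-based policy is a history policy. *)

Section DistrMean.
Variables (R : realType) (T : finType) (p : T -> R).
Hypothesis p_distr : is_distr p.

Lemma distr_mean_le (f : T -> R) (B : R) :
  (forall x, p x != 0 -> f x <= B) -> \sum_x p x * f x <= B.
Proof.
case: p_distr => p_ge0 p_sum1 fB.
rewrite -[leRHS]mul1r -p_sum1 mulr_suml; apply: ler_sum => x _.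
have [->|px] := eqVneq (p x) 0; first by rewrite !mul0r.
by rewrite ler_wpM2l ?fB.
Qed.

Lemma distr_mean_ge (f : T -> R) (B : R) :
  (forall x, p x != 0 -> B <= f x) -> B <= \sum_x p x * f x.
Proof.
move=> Bf; rewrite -lerN2 -sumrN.
under eq_bigr do rewrite -mulrN.
by apply: distr_mean_le => x /Bf; rewrite lerN2.
Qed.

Lemma distr_mean_norm_le (f : T -> R) (B : R) :
  (forall x, p x != 0 -> `|f x| <= B) -> `|\sum_x p x * f x| <= B.
Proof.
move=> fB; rewrite ler_norml distr_mean_le ?distr_mean_ge // => x /fB;
  by rewrite ler_norml => /andP[].
Qed.

Lemma distr_meanDr (f : T -> R) (c : R) :
  \sum_x p x * (f x + c) = \sum_x p x * f x + c.
Proof.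
case: p_distr => _ p_sum1.
by under eq_bigr do rewrite mulrDr; rewrite big_split /= -mulr_suml p_sum1 mul1r.
Qed.

End DistrMean.

Section IPM.
Variables (R : realType) (S : finType) (F : set (S -> R)).
Variables (nu1 nu2 g : S -> R) (delta : R).
Hypothesis dF_le : (dF F nu1 nu2 <= delta%:E)%E.

Let gap := `|\sum_s nu1 s * g s - \sum_s nu2 s * g s|.

Lemma ipm_gap_le_scale (rho : R) :
  0 < rho -> F (fun s => rho^-1 * g s) -> gap <= rho * delta.
Proof.
move=> rho_gt0 Fg.
have : ((`|\sum_s (rho^-1 * g s) * nu1 s - \sum_s (rho^-1 * g s) * nu2 s|)%:E
        <= dF F nu1 nu2)%E by apply: ereal_sup_ubound; exists (fun s => rho^-1 * g s).
move=> /le_trans /(_ dF_le); rewrite lee_fin.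
have scale nu : \sum_s (rho^-1 * g s) * nu s = rho^-1 * \sum_s nu s * g s.
  by rewrite mulr_sumr; apply: eq_bigr => s _; rewrite mulrCA mulrC.
rewrite !scale -mulrBr normrM gtr0_norm ?invr_gt0 // -/gap.
by rewrite -ler_pdivlMl ?invr_gt0 // invrK.
Qed.

Lemma ipm_gap_le_rhoF (k : R) : (rhoF F g <= k%:E)%E -> gap <= delta * k.
Proof.
move=> rho_le.
have [rho0 [rho0_gt0 F_rho0]] : exists rho, 0 < rho /\ F (fun s => rho^-1 * g s).
  apply: contrapT => no_rho; move: rho_le; rewrite /rhoF.
  suff -> : [set rho%:E | rho in [set rho : R | 0 < rho /\ F (fun s => rho^-1 * g s)]]
            = set0 by rewrite ereal_inf0.
  by apply/seteqP; split=> // x [rho rho_ok _]; apply: no_rho; exists rho.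
have gap_le0 := ipm_gap_le_scale rho0_gt0 F_rho0.
have := le_trans (normr_ge0 _) gap_le0.
rewrite pmulr_rge0 // le0r => /orP[/eqP delta0|delta_gt0].
  by move: gap_le0; rewrite delta0 mulr0 mul0r.
rewrite mulrC -ler_pdivrMr //; rewrite -lee_fin (le_trans _ rho_le) //.
apply/ereal_infP => _ [rho [rho_gt0 F_rho] <-]; rewrite lee_fin ler_pdivrMr //.
exact: ipm_gap_le_scale.
Qed.

End IPM.

Lemma increments_geometric_cvgn (R : realType) (u : R^nat) (C g : R) :
  0 <= g < 1 -> (forall k, `|u k.+1 - u k| <= C * g ^+ k) -> cvgn u.
Proof.
move=> /andP[g_ge0 g_lt1] du_le.
have C_ge0 : 0 <= C by have := du_le 0%N; rewrite expr0 mulr1; exact: le_trans.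
pose du k := u k.+1 - u k.
have du_cvg : cvgn (series du).
  apply: normed_cvg; apply: (series_le_cvg (v_ := geometric C g)).
  - by move=> k; exact: normr_ge0.
  - by move=> k; rewrite /geometric /= mulr_ge0 ?exprn_ge0.
  - exact: du_le.
  - by apply: is_cvg_geometric_series; rewrite ger0_norm.
have -> : u = fun n => series du n + u 0%N.
  by apply: funext => n; rewrite /series /= telescope_sumr // subrK.
exact: is_cvgD du_cvg (is_cvg_cst _).
Qed.

Section GeometricLimits.
Variables (R : realType) (u : R^nat) (c K g : R).
Hypotheses (u_cvg : cvgn u) (g_ge0 : 0 <= g) (g_lt1 : g < 1).

Let tail_cvg0 : (fun n => g ^+ n * K) @ \oo --> 0.
Proof.
rewrite -(mul0r K); apply: cvgM; last exact: cvg_cst.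
by apply: cvg_expr; rewrite ger0_norm.
Qed.

Lemma limn_le_geometric : (forall n, u n <= c + g ^+ n * K) -> limn u <= c.
Proof.
move=> u_le.
have w_cvg : (fun n => u n - g ^+ n * K) @ \oo --> limn u - 0.
  exact: cvgB u_cvg tail_cvg0.
rewrite subr0 in w_cvg; rewrite -(cvg_lim _ w_cvg) //.
apply: limr_le; first exact: cvgP w_cvg.
by apply: nearW => n; rewrite lerBlDr.
Qed.

Lemma limn_ge_geometric : (forall n, c - g ^+ n * K <= u n) -> c <= limn u.
Proof.
move=> u_ge.
have w_cvg : (fun n => u n + g ^+ n * K) @ \oo --> limn u + 0.
  exact: cvgD u_cvg tail_cvg0.
rewrite addr0 in w_cvg; rewrite -(cvg_lim _ w_cvg) //.
apply: limr_ge; first exact: cvgP w_cvg.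
by apply: nearW => n; rewrite -lerBlDr.
Qed.

End GeometricLimits.

Section Returns.
Variables (R : realType) (S A : finType).
Variables (P : S -> A -> S -> R) (r : S -> A -> R) (gamma : R).
Hypotheses (P_distr : forall s a, is_distr (P s a)) (gamma_ge0 : 0 <= gamma).

Local Notation ret := (ret_n P r gamma).

Lemma ret_n_increment_le (pol : history_policy R S A) (B : R) :
  is_policy pol -> (forall s a, `|r s a| <= B) ->
  forall k past s, `|ret pol k.+1 past s - ret pol k past s| <= B * gamma ^+ k.
Proof.
move=> pol_distr r_le; elim=> [|k IHk] past s.
  rewrite /= subr0 expr0 mulr1; apply: distr_mean_norm_le => // a _.
  by rewrite big1 ?mulr0 ?addr0 // => s' _; rewrite mulr0.
rewrite [ret _ k.+2 _ _]/= [ret _ k.+1 _ _]/= -sumrB.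
under eq_bigr do rewrite -mulrBr.
apply: distr_mean_norm_le => // a _.
rewrite opprD addrACA subrr add0r -mulrBr -sumrB.
under eq_bigr do rewrite -mulrBr.
rewrite normrM ger0_norm // exprS mulrCA ler_wpM2l //.
by apply: distr_mean_norm_le => // s' _; exact: IHk.
Qed.

Lemma ret_n_cvgn (pol : history_policy R S A) :
  gamma < 1 -> is_policy pol -> forall past s, cvgn (fun n => ret pol n past s).
Proof.
move=> gamma_lt1 pol_distr past s.
pose B := \sum_(x : S * A) `|r x.1 x.2|.
have r_le s' a : `|r s' a| <= B.
  by rewrite /B (bigD1 (s', a)) //= lerDl sumr_ge0.
apply: (@increments_geometric_cvgn _ _ B gamma); first by rewrite gamma_ge0.
by move=> k; exact: ret_n_increment_le.
Qed.

End Returns.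

(* The policy that a feature-based agent follows from the history [past0]
   onwards, viewed as a history-dependent policy started afresh. *)
Definition feature_policy {R : realType} {S A : finType} {Z : Type}
    (sigma : seq (S * A) -> S -> Z) (mu : Z -> A -> R) (past0 : seq (S * A)) :
    history_policy R S A :=
  fun past s => mu (sigma (past0 ++ past) s).

Lemma ret_n_feature_policy (R : realType) (S A : finType) (Z : Type)
    (P : S -> A -> S -> R) (r : S -> A -> R) (gamma : R)
    (sigma : seq (S * A) -> S -> Z) (fhat : Z -> S -> A -> Z) (mu : Z -> A -> R)
    (past0 : seq (S * A)) :
  recursively_updatable sigma fhat ->
  forall n past s, ret_n P r gamma (feature_policy sigma mu past0) n past s
    = feat_ret_n P r gamma fhat mu n (sigma (past0 ++ past) s) s.
Proof.
move=> sigma_upd; elim=> [|n IHn] past s //=.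
apply: eq_bigr => a _; congr (_ * (_ + _ * _)); apply: eq_bigr => s' _.
by rewrite IHn -rcons_cat sigma_upd.
Qed.

Lemma Vpi_feature_policy (R : realType) (S A : finType) (Z : Type)
    (P : S -> A -> S -> R) (r : S -> A -> R) (gamma : R)
    (sigma : seq (S * A) -> S -> Z) (fhat : Z -> S -> A -> Z) (mu : Z -> A -> R) :
  recursively_updatable sigma fhat ->
  forall past s, Vpi P r gamma sigma fhat mu past s
    = policy_value P r gamma (feature_policy sigma mu past) s.
Proof.
move=> sigma_upd past s; rewrite /Vpi /policy_value; congr (limn _).
by apply: funext => n; rewrite (ret_n_feature_policy _ _ _ _ _ sigma_upd) cats0.
Qed.

Section AISValueBounds.
Variables (R : realType) (S A : finType) (Z : Type).
Variables (P : S -> A -> S -> R) (r : S -> A -> R) (gamma : R).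
Variables (F : set (S -> R)) (sigma : seq (S * A) -> S -> Z) (fhat : Z -> S -> A -> Z).
Variables (eps delta : R) (rhat : Z -> A -> R) (Phat : Z -> A -> S -> R).
Variables (Vhat : Z -> R) (mu : Z -> A -> R) (M : R).

Hypotheses (gamma_ge0 : 0 <= gamma) (gamma_lt1 : gamma < 1).
Hypothesis P_distr : forall s a, is_distr (P s a).
Hypothesis sigma_upd : recursively_updatable sigma fhat.
Hypothesis r_approx : forall past s a, `|r s a - rhat (sigma past s) a| <= eps.
Hypothesis P_approx :
  forall past s a, (dF F (P s a) (Phat (sigma past s) a) <= delta%:E)%E.
Hypothesis Vhat_bounded : forall z, `|Vhat z| <= M.

Local Notation Q := (AIS_Q gamma rhat Phat fhat Vhat).

Hypothesis Q_le_Vhat : forall z a, Q z a <= Vhat z.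
Hypothesis Vhat_attained : forall z, exists a, Q z a = Vhat z.
Hypothesis mu_distr : forall z, is_distr (mu z).
Hypothesis mu_greedy : forall z a, mu z a != 0 -> forall b, Q z b <= Q z a.
Hypothesis kappa_finite : (kappaF F Vhat fhat < +oo)%E.

Let kappa := fine (kappaF F Vhat fhat).
Let c := eps + gamma * (delta * kappa).
(* [err n] is the n-th iterate of [x |-> c + gamma * x] from [M]; it tends to
   [c / (1 - gamma)]. *)
Let err n := c / (1 - gamma) + gamma ^+ n * (M - c / (1 - gamma)).

Let err0 : err 0 = M.
Proof. by rewrite /err expr0 mul1r addrC subrK. Qed.

Let errS n : err n.+1 = c + gamma * err n.
Proof.
have gamma_neq1 : 1 - gamma != 0 by rewrite subr_eq0 eq_sym lt_eqF.
by rewrite /err exprS; field.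
Qed.

Lemma model_mean_gap past s a :
  `|\sum_s' P s a s' * Vhat (fhat (sigma past s) s' a)
    - \sum_s' Phat (sigma past s) a s' * Vhat (fhat (sigma past s) s' a)|
  <= delta * kappa.
Proof.
set z := sigma past s.
apply: (ipm_gap_le_rhoF (g := fun s' => Vhat (fhat z s' a)) (P_approx past s a)).
have rhoF_le : (rhoF F (fun s' => Vhat (fhat z s' a)) <= kappaF F Vhat fhat)%E.
  by apply: ereal_sup_ubound; exists (z, a).
(* If [kappaF = -oo] then [kappa = fine -oo = 0], but also [rhoF = -oo]. *)
move: kappa_finite rhoF_le; rewrite /kappa.
by case: kappaF => [k| |] //= _ /le_trans; apply; exact: leNye.
Qed.

Lemma bellman_gap past s a :
  `|r s a + gamma * \sum_s' P s a s' * Vhat (fhat (sigma past s) s' a)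
    - Q (sigma past s) a| <= c.
Proof.
rewrite /Q /AIS_Q opprD addrACA -mulrBr.
apply: (le_trans (ler_normD _ _)); rewrite normrM ger0_norm //.
by apply: lerD; [exact: r_approx | rewrite ler_wpM2l //; exact: model_mean_gap].
Qed.

Lemma greedy_Q_Vhat z a : mu z a != 0 -> Q z a = Vhat z.
Proof.
move=> mu_za; have [b Qb] := Vhat_attained z.
by apply/eqP; rewrite eq_le Q_le_Vhat -Qb mu_greedy.
Qed.

Lemma ret_n_le_Vhat (pol : history_policy R S A) : is_policy pol ->
  forall n past' past s, ret_n P r gamma pol n past' s <= Vhat (sigma past s) + err n.
Proof.
move=> pol_distr; elim=> [|n IHn] past' past s.
  by have := Vhat_bounded (sigma past s); rewrite /= err0 ler_norml => /andP[? _]; lra.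
apply: distr_mean_le => // a _; set z := sigma past s.
have mean_le : \sum_s' P s a s' * ret_n P r gamma pol n (rcons past' (s, a)) s'
    <= \sum_s' P s a s' * Vhat (fhat z s' a) + err n.
  rewrite -distr_meanDr //; apply: ler_sum => s' _.
  by rewrite ler_wpM2l ?(P_distr s a).1 // -sigma_upd IHn.
have := bellman_gap past s a; rewrite ler_norml => /andP[_ step_le].
have := Q_le_Vhat z a; have := ler_wpM2l gamma_ge0 mean_le.
rewrite errS; lra.
Qed.

Lemma feat_ret_n_ge_Vhat n past s :
  Vhat (sigma past s) - err n <= feat_ret_n P r gamma fhat mu n (sigma past s) s.
Proof.
elim: n past s => [|n IHn] past s.
  by have := Vhat_bounded (sigma past s); rewrite /= err0 ler_norml => /andP[_ ?]; lra.
apply: distr_mean_ge => // a mu_a; set z := sigma past s.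
have mean_ge : \sum_s' P s a s' * Vhat (fhat z s' a) - err n
    <= \sum_s' P s a s' * feat_ret_n P r gamma fhat mu n (fhat z s' a) s'.
  rewrite -distr_meanDr //; apply: ler_sum => s' _.
  by rewrite ler_wpM2l ?(P_distr s a).1 // -sigma_upd IHn.
have := bellman_gap past s a; rewrite ler_norml => /andP[step_ge _].
have := greedy_Q_Vhat mu_a; have := ler_wpM2l gamma_ge0 mean_ge.
rewrite errS; lra.
Qed.

Lemma policy_value_le_Vhat (pol : history_policy R S A) : is_policy pol ->
  forall past s, policy_value P r gamma pol s <= Vhat (sigma past s) + c / (1 - gamma).
Proof.
move=> pol_distr past s.
apply: (limn_le_geometric (K := M - c / (1 - gamma)) (g := gamma)) => //.
  exact: ret_n_cvgn.
by move=> n; rewrite -addrA; exact: ret_n_le_Vhat.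
Qed.

Lemma Vpi_ge_Vhat past s :
  Vhat (sigma past s) - c / (1 - gamma) <= Vpi P r gamma sigma fhat mu past s.
Proof.
rewrite (Vpi_feature_policy _ _ _ _ sigma_upd).
apply: (limn_ge_geometric (K := M - c / (1 - gamma)) (g := gamma)) => //.
  by apply: ret_n_cvgn => // past' s'; exact: mu_distr.
move=> n; rewrite (ret_n_feature_policy _ _ _ _ _ sigma_upd) cats0 -addrA -opprD.
exact: feat_ret_n_ge_Vhat.
Qed.

Lemma Vstar_le_Vhat past s :
  Vstar P r gamma s <= Vhat (sigma past s) + c / (1 - gamma).
Proof.
apply: ge_sup => [|_ [pol pol_distr <-]]; last exact: policy_value_le_Vhat.
exists (policy_value P r gamma (feature_policy sigma mu past) s).
by exists (feature_policy sigma mu past) => // past' s'; exact: mu_distr.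
Qed.

Lemma Vpi_le_Vstar past s :
  Vpi P r gamma sigma fhat mu past s <= Vstar P r gamma s.
Proof.
have pi_distr : is_policy (feature_policy sigma mu past).
  by move=> past' s'; exact: mu_distr.
rewrite (Vpi_feature_policy _ _ _ _ sigma_upd); apply: sup_upper_bound.
  split; first by eexists; exists (feature_policy sigma mu past).
  exists (Vhat (sigma past s) + c / (1 - gamma)) => _ [pol pol_distr <-].
  exact: policy_value_le_Vhat.
by exists (feature_policy sigma mu past).
Qed.

Lemma Vstar_Vpi_gap past s :
  `|Vstar P r gamma s - Vpi P r gamma sigma fhat mu past s| <= 2 * (c / (1 - gamma)).
Proof.
have := Vstar_le_Vhat past s; have := Vpi_le_Vstar past s.
have := Vpi_ge_Vhat past s; rewrite ler_norml; lra.
Qed.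

End AISValueBounds.

Theorem theorem1 (R : realType) (S A : finType) (Z : Type)
    (P : S -> A -> S -> R) (r : S -> A -> R) (gamma : R)
    (F : set (S -> R)) (sigma : seq (S * A) -> S -> Z) (fhat : Z -> S -> A -> Z)
    (eps delta : R) (rhat : Z -> A -> R) (Phat : Z -> A -> S -> R)
    (Vhat : Z -> R) (mu : Z -> A -> R) :
  0 < gamma < 1 ->
  (forall s a, is_distr (P s a)) ->
  recursively_updatable sigma fhat ->
  is_AIS P r F sigma eps delta rhat Phat ->
  solves_AIS_DP gamma rhat Phat fhat Vhat ->
  greedy gamma rhat Phat fhat Vhat mu ->
  (kappaF F Vhat fhat < +oo)%E ->
  forall (past : seq (S * A)) (s : S),
    `| Vstar P r gamma s - Vpi P r gamma sigma fhat mu past s |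
      <= 2 * (eps + gamma * delta * fine (kappaF F Vhat fhat)) / (1 - gamma).
Proof.
move=> /andP[gamma_gt0 gamma_lt1] P_distr sigma_upd [_ [_ AIS_approx]]
  [[M Vhat_bounded] Vhat_DP] [mu_distr mu_greedy] kappa_finite past s.
rewrite -mulrA -(mulrA gamma).
apply: (Vstar_Vpi_gap (ltW gamma_gt0) gamma_lt1 P_distr sigma_upd _ _ Vhat_bounded
          _ _ mu_distr mu_greedy kappa_finite).
- by move=> past' s' a; case: (AIS_approx past' s' a).
- by move=> past' s' a; case: (AIS_approx past' s' a).
- by move=> z; case: (Vhat_DP z).
- by move=> z; case: (Vhat_DP z).
Qed.
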